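(* Let $\mathcal{A}_1,\mathcal{A}_2$ be finite automata each with at most $m$ states, and let $d$ be a multiple of $2\cdot(m^3)!$. If $\mathrm{Adh}_{\preceq_d}(L(\mathcal{A}_1))\cap\mathrm{Adh}_{\preceq_d}(L(\mathcal{A}_2))\neq\emptyset$, then $\mathrm{Adh}_{\preceq_{\ell d}}(L(\mathcal{A}_1))\cap\mathrm{Adh}_{\preceq_{\ell d}}(L(\mathcal{A}_2))\neq\emptyset$ for every $\ell\ge1$.
   Context: For $d\ge1$ define the order $\preceq_d$ on $\Sigma^*$: $u\preceq_d v$ iff one can write $u=u_0u_1\cdots u_n$ and $v=u_0v_1u_1v_2\cdots v_nu_n$ with each $|v_i|$ divisible by $d$ (i.e. $v$ arises from $u$ by inserting factors of length divisible by $d$). This is a WQO. For a WQO $(X,\preceq)$: a set is directed if any two elements have a common upper bound in it; an ideal is a nonempty, downward closed, directed subset; for $L\subseteq X$, the adherence $\mathrm{Adh}_\preceq(L)$ is the set of ideals $I$ with $I\subseteq\downarrow_\preceq(L\cap I)$ (equivalently, $I=\downarrow_\preceq D$ for some directed $D\subseteq L$). *)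

From mathcomp Require Import all_boot.
Set Implicit Arguments. Unset Strict Implicit. Unset Printing Implicit Defensive.

Section Defs.
Variable S : finType.

(* v = u_0 v_1 u_1 v_2 ... v_n u_n  given us = [u_0;...;u_n], vs = [v_1;...;v_n] *)
Definition interleave (us vs : seq (seq S)) : seq S :=
  head [::] us ++ flatten [seq p.1 ++ p.2 | p <- zip vs (behead us)].

Definition subword_mod (d : nat) (u v : seq S) : Prop :=
  exists (us vs : seq (seq S)),
    [/\ size us = (size vs).+1, u = flatten us, v = interleave us vs
      & all (fun w => d %| size w) vs].

Definition down_closed (le : seq S -> seq S -> Prop) (I : seq S -> Prop) : Prop :=
  forall u v, le u v -> I v -> I u.

Definition directed (le : seq S -> seq S -> Prop) (D : seq S -> Prop) : Prop :=
  forall u v, D u -> D v -> exists w, [/\ D w, le u w & le v w].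

Definition is_ideal (le : seq S -> seq S -> Prop) (I : seq S -> Prop) : Prop :=
  [/\ exists u, I u, down_closed le I & directed le I].

Definition downc (le : seq S -> seq S -> Prop) (L : seq S -> Prop) : seq S -> Prop :=
  fun u => exists2 v, L v & le u v.

Definition in_adherence (le : seq S -> seq S -> Prop) (L : seq S -> Prop)
    (I : seq S -> Prop) : Prop :=
  is_ideal le I /\ forall u, I u -> downc le (fun v => L v /\ I v) u.

Record nfa := NFA {
  nfa_state : finType;
  nfa_init : {set nfa_state};
  nfa_final : {set nfa_state};
  nfa_trans : nfa_state -> S -> {set nfa_state} }.

Definition nfa_reach (A : nfa) (X : {set nfa_state A}) (w : seq S) : {set nfa_state A} :=
  foldl (fun (Y : {set nfa_state A}) a => \bigcup_(q in Y) nfa_trans q a) X w.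

Definition nfa_lang (A : nfa) : seq S -> Prop :=
  fun w => [exists q in nfa_reach (nfa_init A) w, q \in nfa_final A].

End Defs.

(* An ideal lies in both adherences iff there is an infinite chain
   w_0 <= w_1 <= ... alternating between L(A_1) and L(A_2): an ideal yields such
   a chain through its adherence, and conversely the downward closure of the chain
   is such an ideal.  So it suffices to turn an alternating <=_d-chain into an
   alternating <=_(l d)-chain, i.e. to multiply by l every factor inserted between
   consecutive words.
   Let the first word of a <=_d-chain be P B Q with d dividing |B|.  Factor all
   later words compatibly with P, the letters of B, and Q.  Fix an accepting run
   on the first word, and accepting runs of A_1 and of A_2 that recur infinitely
   often along the chain.  There are at most m^3 triples of states, so two
   positions i < j <= m^3 of B carry the same triple.  Pumping the factor between
   them along a subsequence of the chain gives a new alternating <=_d-chain, and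
   since j - i divides (m^3)!, hence |B|, it can be pumped so that B grows to a
   word of length l |B|.  Doing this for each factor inserted in w_0 <=_d w_1
   gives w_0 <=_(l d) w'_1 at the head of a new alternating chain; iterating
   yields the required <=_(l d)-chain. *)

From mathcomp Require Import all_boot zify.
From Stdlib Require Import Classical IndefiniteDescription.
Set Implicit Arguments. Unset Strict Implicit. Unset Printing Implicit Defensive.

Lemma dependent_choice_nat (T : Type) (P : nat -> T -> Prop)
    (R : nat -> T -> T -> Prop) (x0 : T) :
  P 0 x0 -> (forall n x, P n x -> exists y, P n.+1 y /\ R n x y) ->
  exists f : nat -> T, f 0 = x0 /\ forall n, P n (f n) /\ R n (f n) (f n.+1).
Proof.
move=> P0 Pstep.
have next n (x : {x | P n x}) : {y : {y | P n.+1 y} | R n (sval x) (sval y)}.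
  case: x => x Px; have /constructive_indefinite_description [y [Py Rxy]] := Pstep n x Px.
  exact: exist _ (exist _ y Py) Rxy.
pose fix f n : {x | P n x} :=
  if n is n'.+1 then sval (next n' (f n')) else exist _ x0 P0.
exists (fun n => sval (f n)); split => // n.
by split; [exact: svalP (f n) | exact: svalP (next n (f n))].
Qed.

Lemma recurrent_value (A : finType) (R : nat -> A -> Prop) :
  (forall N, exists n a, N <= n /\ R n a) ->
  exists a, forall N, exists2 n, N <= n & R n a.
Proof.
move=> Rinf; apply: NNPP => none.
have bounded a : exists N, forall n, N <= n -> ~ R n a.
  apply: NNPP => unbounded; apply: none; exists a => N.
  apply: NNPP => noR; apply: unbounded; exists N => n Nn Rn.
  by apply: noR; exists n.
have [Nf HNf] := fin_all_exists bounded.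
have [n [a [Nn Rna]]] := Rinf (\max_a Nf a).
by apply: (HNf a n) Rna; apply: leq_trans Nn; apply: leq_bigmax.
Qed.

Lemma pigeonhole_nat (A : finType) (f : nat -> A) n :
  #|A| <= n -> exists i j, i < j <= n /\ f i = f j.
Proof.
move=> cardA; pose g (i : 'I_n.+1) := f i.
have /injectivePn [i [j neq_ij gij]] : ~~ injectiveb g.
  apply/negP => /injectiveP /leq_card; rewrite card_ord; lia.
have [lt_ij | lt_ji | eq_ij] := ltngtP i j.
- by exists i, j; rewrite lt_ij -ltnS ltn_ord.
- by exists j, i; rewrite lt_ji -ltnS ltn_ord.
- by move/eqP: neq_ij; case; apply: val_inj.
Qed.

Lemma alternating_subsequence (P0 P1 : nat -> Prop) :
  (forall N, exists2 n, N <= n & P0 n) -> (forall N, exists2 n, N <= n & P1 n) ->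
  exists ns : nat -> nat,
    ns 0 = 0 /\ forall k, ns k < ns k.+1 /\ (if odd k.+1 then P1 else P0) (ns k.+1).
Proof.
move=> P0_inf P1_inf.
have /functional_choice [g0 g0P] : forall N, exists n, N < n /\ P0 n.
  by move=> N; have [n le_n P0n] := P0_inf N.+1; exists n.
have /functional_choice [g1 g1P] : forall N, exists n, N < n /\ P1 n.
  by move=> N; have [n le_n P1n] := P1_inf N.+1; exists n.
pose fix ns k := if k is k'.+1 then (if odd k then g1 else g0) (ns k') else 0.
by exists ns; split=> // k /=; case: odd; [apply: g0P | apply: g1P].
Qed.

Section DSubword.
Variable S : finType.
Implicit Types (u v w x y : seq S) (fs gs : seq (seq S)).

Inductive dsubword (d : nat) : seq S -> seq S -> Prop :=
| dsubword_nil v : d %| size v -> dsubword d [::] v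
| dsubword_cons B a u v :
    d %| size B -> dsubword d u v -> dsubword d (a :: u) (B ++ a :: v).

Lemma dsubword_refl d u : dsubword d u u.
Proof.
elim: u => [|a u IHu]; first by apply: dsubword_nil; rewrite dvdn0.
exact: (@dsubword_cons d [::]).
Qed.

Lemma dsubword_size d u v : dsubword d u v -> exists k, size v = size u + k * d.
Proof.
elim=> [w dvd_w | B a u' v' dvd_B _ [k size_v]]; first by exists (size w %/ d); rewrite divnK.
by exists (k + size B %/ d); rewrite size_cat /= size_v mulnDl divnK //; lia.
Qed.

Lemma dsubword_nilE d v : dsubword d [::] v -> d %| size v.
Proof. by case/dsubword_size=> k ->; rewrite dvdn_mull. Qed.

Lemma dsubword_padl d B u v : d %| size B -> dsubword d u v -> dsubword d u (B ++ v).
Proof.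
move=> dvd_B [w dvd_w | B' a u' v' dvd_B' sub_uv].
  by apply: dsubword_nil; rewrite size_cat dvdn_add.
by rewrite catA; apply: dsubword_cons; rewrite ?size_cat ?dvdn_add.
Qed.

Lemma dsubword_cat d u1 u2 v1 v2 :
  dsubword d u1 v1 -> dsubword d u2 v2 -> dsubword d (u1 ++ u2) (v1 ++ v2).
Proof.
elim=> [w dvd_w | B a u v dvd_B _ IH] sub2; first exact: dsubword_padl.
by rewrite -catA; apply: dsubword_cons => //; apply: IH.
Qed.

Lemma dsubword_consE d a u v : dsubword d (a :: u) v ->
  exists B v', [/\ v = B ++ a :: v', d %| size B & dsubword d u v'].
Proof. by move=> sub_uv; inversion sub_uv; exists B, v0. Qed.

Lemma dsubword_catE d u1 u2 v : dsubword d (u1 ++ u2) v ->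
  exists v1 v2, [/\ v = v1 ++ v2, dsubword d u1 v1 & dsubword d u2 v2].
Proof.
elim: u1 v => [|a u1 IH] v /=.
  by exists [::], v; split=> //; apply: dsubword_nil; rewrite dvdn0.
case/dsubword_consE=> [B [v' [-> dvd_B /IH [v1 [v2 [-> sub1 sub2]]]]]].
by exists (B ++ a :: v1), v2; split; [rewrite -catA | apply: dsubword_cons | ].
Qed.

Lemma dsubword_trans d v u w : dsubword d u v -> dsubword d v w -> dsubword d u w.
Proof.
move=> sub_uv; elim: sub_uv w => [v' dvd_v | B a u' v' dvd_B _ IH] w sub_vw.
  by apply: dsubword_nil; have [k ->] := dsubword_size sub_vw; rewrite dvdn_add // dvdn_mull.
have [w1 [w2 [-> sub1 /dsubword_consE [B2 [w3 [-> dvd_B2 sub3]]]]]] := dsubword_catE sub_vw.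
have [k size_w1] := dsubword_size sub1.
rewrite catA; apply: dsubword_cons (IH _ sub3).
by rewrite size_cat size_w1 !dvdn_add ?dvdn_mull.
Qed.

Lemma subword_modP d u v : subword_mod d u v <-> dsubword d u v.
Proof.
split.
  case=> us [vs [size_us -> -> dvd_vs]].
  elim: vs us size_us dvd_vs => [|w vs IH] [|u0 [|u1 us]] //=.
  - by move=> _ _; rewrite /interleave /= !cats0; apply: dsubword_refl.
  - move=> [size_us] /andP [dvd_w dvd_vs].
    have := IH (u1 :: us) (congr1 succn size_us) dvd_vs; rewrite /interleave /=.
    by move=> sub_us; apply: dsubword_cat (dsubword_refl _ _) _; rewrite -catA; apply: dsubword_padl.
elim=> [w dvd_w | B a u' v' dvd_B _ [[|u0 us] [vs [//= [size_us] -> -> dvd_vs]]]].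
  by exists [:: [::]; [::]], [:: w]; rewrite /interleave /= !cats0 dvd_w.
exists ([::] :: (a :: u0) :: us), (B :: vs).
by rewrite /interleave /= size_us dvd_B dvd_vs -catA.
Qed.

Definition dsubwords d fs gs :=
  size fs = size gs /\ forall k, dsubword d (nth [::] fs k) (nth [::] gs k).

Lemma dsubwords_refl d fs : dsubwords d fs fs.
Proof. by split=> // k; apply: dsubword_refl. Qed.

Lemma dsubwords_trans d gs fs hs : dsubwords d fs gs -> dsubwords d gs hs -> dsubwords d fs hs.
Proof.
move=> [size_fs sub1] [size_gs sub2]; split=> [|k]; first by rewrite size_fs.
exact: dsubword_trans (sub1 k) (sub2 k).
Qed.

Lemma dsubwords_take d n fs gs : dsubwords d fs gs -> dsubwords d (take n fs) (take n gs).
Proof.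
move=> [size_fs sub_fs]; split; first by rewrite !size_take size_fs.
move=> k; case: (ltnP k n) => [lt_kn | le_nk]; first by rewrite !nth_take.
by rewrite !nth_default ?size_take -?size_fs; [apply: dsubword_refl | case: ltnP; lia..].
Qed.

Lemma dsubwords_drop d n fs gs : dsubwords d fs gs -> dsubwords d (drop n fs) (drop n gs).
Proof. by move=> [size_fs sub_fs]; split=> [|k]; rewrite ?size_drop ?size_fs // !nth_drop. Qed.

Lemma dsubword_flatten d fs gs : dsubwords d fs gs -> dsubword d (flatten fs) (flatten gs).
Proof.
elim: fs gs => [|f fs IH] [|g gs] [//= size_fs sub_fs]; first exact: dsubword_refl.
apply: dsubword_cat (sub_fs 0) (IH _ _).
by split=> [|k]; [case: size_fs | apply: (sub_fs k.+1)].
Qed.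

Lemma dsubword_flattenE d fs w : fs != [::] -> dsubword d (flatten fs) w ->
  exists2 gs, flatten gs = w & dsubwords d fs gs.
Proof.
elim: fs w => [|f [|f' fs] IH] w //= _.
  rewrite cats0 => sub_fw; exists [:: w]; rewrite /= ?cats0 //.
  by split=> [//|[|k]] //=; apply: dsubword_refl.
case/dsubword_catE=> [w1 [w2 [-> sub1 /IH [//| gs <- [size_gs sub_gs]]]]].
by exists (w1 :: gs) => //; split=> [|[]]; rewrite //= -size_gs.
Qed.

Lemma dsubword_nseq d k u v :
  dsubword d u v -> dsubword d (flatten (nseq k u)) (flatten (nseq k v)).
Proof. by move=> sub_uv; elim: k => [|k IH] /=; [apply: dsubword_refl | apply: dsubword_cat]. Qed.


(* Repeats blocks [i.+1 .. j] of [fs] [k] times; in a run [s] on [fs] they lead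
   from state [nth s i.+1] to state [nth s j.+1]. *)
Definition pump i j k fs : seq S :=
  flatten (take i.+1 fs) ++ flatten (nseq k (flatten (take (j - i) (drop i.+1 fs))))
  ++ flatten (drop j.+1 fs).

Lemma dsubword_pump d i j k fs gs :
  dsubwords d fs gs -> dsubword d (pump i j k fs) (pump i j k gs).
Proof.
move=> sub_fs; rewrite /pump.
apply: dsubword_cat; first exact/dsubword_flatten/dsubwords_take.
apply: dsubword_cat; last exact/dsubword_flatten/dsubwords_drop.
exact/dsubword_nseq/dsubword_flatten/dsubwords_take/dsubwords_drop.
Qed.

Lemma pump_letters P B Q i j k : i < j <= size B ->
  pump i j k (P :: rcons [seq [:: a] | a <- B] Q)
  = P ++ (take i B ++ flatten (nseq k (take (j - i) (drop i B))) ++ drop j B) ++ Q.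
Proof.
move=> /andP [lt_ij le_jB].
have drop_catl n (s1 s2 : seq (seq S)) : n <= size s1 -> drop n (s1 ++ s2) = drop n s1 ++ s2.
  rewrite drop_cat; case: ltnP => // ? ?.
  have -> : n = size s1 by lia.
  by rewrite subnn drop0 drop_size.
rewrite /pump -cats1 /= takel_cat ?size_map; last by lia.
rewrite !drop_catl ?size_map ?takel_cat ?size_drop ?size_map; try lia.
by rewrite -map_take -!map_drop -map_take !flatten_cat !flatten_seq1 /= cats0 !catA.
Qed.

End DSubword.

Section NFA.
Variables (S : finType) (A : nfa S).
Notation Q := (nfa_state A).
Implicit Types (q : Q) (X Y : {set Q}) (u v w : seq S) (fs : seq (seq S)).

Lemma nfa_reach_cat X u v : nfa_reach X (u ++ v) = nfa_reach (nfa_reach X u) v.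
Proof. exact: foldl_cat. Qed.

Lemma nfa_reach_subset X Y w : X \subset Y -> nfa_reach X w \subset nfa_reach Y w.
Proof.
elim: w X Y => //= a w IHw X Y sub_XY; apply: IHw.
apply/subsetP=> q /bigcupP [p pX qp]; apply/bigcupP; exists p => //.
exact: subsetP sub_XY p pX.
Qed.

Lemma nfa_reach_sub1 X w q : q \in X -> nfa_reach [set q] w \subset nfa_reach X w.
Proof. by move=> qX; apply: nfa_reach_subset; rewrite sub1set. Qed.

Lemma nfa_reachP X w q' :
  q' \in nfa_reach X w -> exists2 q, q \in X & q' \in nfa_reach [set q] w.
Proof.
elim: w X => [|a w IHw] X /=; first by exists q' => //; rewrite /nfa_reach /= in_set1.
case/IHw=> q1 /bigcupP [q qX q1q] reach_q'; exists q => //.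
by apply: subsetP (nfa_reach_sub1 _ _) _ reach_q'; apply/bigcupP; exists q; rewrite ?in_set1.
Qed.

Lemma nfa_reach_trans q2 q1 q3 u v :
  q2 \in nfa_reach [set q1] u -> q3 \in nfa_reach [set q2] v ->
  q3 \in nfa_reach [set q1] (u ++ v).
Proof. by move=> reach_q2 /(subsetP (nfa_reach_sub1 _ reach_q2)); rewrite nfa_reach_cat. Qed.

Lemma nfa_reach_iter q w k :
  q \in nfa_reach [set q] w -> q \in nfa_reach [set q] (flatten (nseq k w)).
Proof.
move=> loop_q; elim: k => [|k IHk]; first by rewrite /nfa_reach /= in_set1.
exact: nfa_reach_trans loop_q IHk.
Qed.

Fixpoint nfa_run (q : Q) fs (qs : seq Q) : bool :=
  match fs, qs with
  | [::], [::] => true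
  | f :: fs', q' :: qs' => (q' \in nfa_reach [set q] f) && nfa_run q' fs' qs'
  | _, _ => false
  end.

Definition nfa_accepting_run fs (s : seq Q) : bool :=
  if s is q0 :: qs then
    [&& q0 \in nfa_init A, nfa_run q0 fs qs & last q0 qs \in nfa_final A]
  else false.

Lemma nfa_run_size q fs qs : nfa_run q fs qs -> size qs = size fs.
Proof. by elim: fs q qs => [|f fs IH] q [|q' qs] //= /andP [_ /IH ->]. Qed.

Lemma nfa_accepting_run_size fs s : nfa_accepting_run fs s -> size s = (size fs).+1.
Proof. by case: s => // q0 qs /and3P [_ /nfa_run_size /= -> _]. Qed.

Lemma nfa_run_segment x q fs qs i j : nfa_run q fs qs -> i <= j <= size fs ->
  nth x (q :: qs) j \in nfa_reach [set nth x (q :: qs) i] (flatten (take (j - i) (drop i fs))).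
Proof.
elim: fs q qs i j => [|f fs IH] q [|q' qs] // [|i] [|j] //=;
  try by [rewrite /nfa_reach /= in_set1 | rewrite andbF].
  case/andP=> reach_q' run_qs le_jfs; apply: nfa_reach_trans reach_q' _.
  by have := IH _ _ 0 j run_qs; rewrite drop0 subn0; apply.
by case/andP=> _ run_qs le_ij; rewrite subSS; apply: IH.
Qed.

Lemma nfa_reach_run q fs q' : q' \in nfa_reach [set q] (flatten fs) ->
  exists2 qs, nfa_run q fs qs & last q qs = q'.
Proof.
elim: fs q => [|f fs IH] q /=; first by rewrite /nfa_reach /= in_set1 => /eqP ->; exists [::].
rewrite nfa_reach_cat => /nfa_reachP [q1 reach_q1 /IH [qs run_qs <-]].
by exists (q1 :: qs); rewrite /= ?reach_q1.
Qed.

Lemma nfa_lang_accepting_run fs :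
  nfa_lang A (flatten fs) -> exists s, nfa_accepting_run fs s.
Proof.
case/existsP=> q /andP [/nfa_reachP [q0 init_q0 /nfa_reach_run [qs run_qs last_qs]] final_q].
by exists (q0 :: qs); rewrite /= init_q0 run_qs last_qs.
Qed.

Lemma nfa_lang_pump x fs s i j k : nfa_accepting_run fs s -> i < j < size fs ->
  nth x s i.+1 = nth x s j.+1 -> nfa_lang A (pump i j k fs).
Proof.
case: s => [//|q0 qs] /and3P [init_q0 run_qs final] /andP [lt_ij lt_jfs] eq_ij.
have size_qs := nfa_run_size run_qs.
have segment := nfa_run_segment x run_qs.
have pre := segment 0 i.+1; rewrite drop0 subn0 in pre.
have loop := segment i.+1 j.+1; rewrite subSS eq_ij in loop.
have post := segment j.+1 (size fs); rewrite -size_drop take_size in post.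
rewrite -size_qs -last_nth in post.
apply/existsP; exists (last q0 qs); rewrite final andbT.
apply: subsetP (nfa_reach_sub1 _ init_q0) _ _.
apply: nfa_reach_trans (pre _) _; first by lia.
rewrite eq_ij; apply: nfa_reach_trans (nfa_reach_iter k (loop _)) (post _); lia.
Qed.

End NFA.

Section AlternatingChains.
Variable S : finType.
Implicit Types (le : seq S -> seq S -> Prop) (c : nat -> seq S).

Definition alt_chain le (L1 L2 : seq S -> Prop) c :=
  forall n, le (c n) (c n.+1) /\ (if odd n then L2 else L1) (c n).

Lemma alt_chain_shift le (L1 L2 : seq S -> Prop) c :
  alt_chain le L1 L2 c -> alt_chain le L2 L1 (fun n => c n.+1).
Proof. by move=> chain n; have := chain n.+1; rewrite /=; case: odd. Qed.

Lemma alt_chain_sub le le' (L1 L2 : seq S -> Prop) c : (forall u v, le u v -> le' u v) ->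
  alt_chain le L1 L2 c -> alt_chain le' L1 L2 c.
Proof. by move=> sub_le chain n; have [/sub_le] := chain n. Qed.

Lemma adherence_alt_chain le (L1 L2 I : seq S -> Prop) :
  in_adherence le L1 I -> in_adherence le L2 I -> exists c, alt_chain le L1 L2 c.
Proof.
move=> [[[u0 Iu0] _ _] adh1] [_ adh2].
have adh n u : I u -> exists2 v, I v /\ (if odd n then L2 else L1) v & le u v.
  move=> Iu; have [v [Lv Iv] le_uv] : downc le (fun v => (if odd n then L2 else L1) v /\ I v) u.
    by case: odd; [apply: adh2 | apply: adh1].
  by exists v.
pose P n v := I v /\ (if odd n then L2 else L1) v.
have [v0 P0v0 _] := adh 0 u0 Iu0.
have next n u : P n u -> exists v, P n.+1 v /\ le u v.
  by move=> [Iu _]; have [v] := adh n.+1 u Iu; exists v.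
have [c [_ c_spec]] := @dependent_choice_nat _ P (fun _ => le) v0 P0v0 next.
by exists c => n; have [[_ Lc] le_c] := c_spec n.
Qed.

Lemma alt_chain_adherence le (L1 L2 : seq S -> Prop) c :
  (forall u, le u u) -> (forall v u w, le u v -> le v w -> le u w) ->
  alt_chain le L1 L2 c -> exists I, in_adherence le L1 I /\ in_adherence le L2 I.
Proof.
move=> le_refl le_trans chain.
have le_c : {homo c : i j / i <= j >-> le i j}.
  exact: homo_leq le_refl le_trans (fun n => (chain n).1).
pose I u := exists k, le u (c k).
have ideal : is_ideal le I.
  split; first by exists (c 0), 0.
    by move=> u v le_uv [k le_vk]; exists k; apply: le_trans le_uv le_vk.
  move=> u v [k1 le_u] [k2 le_v]; exists (c (maxn k1 k2)); split; first by exists (maxn k1 k2).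
    by apply: le_trans le_u (le_c _ _ (leq_maxl _ _)).
  by apply: le_trans le_v (le_c _ _ (leq_maxr _ _)).
have adh (b : bool) : in_adherence le (if b then L2 else L1) I.
  split=> // u [k le_uk].
  have [k' le_kk' odd_k'] : exists2 k', k <= k' & odd k' = b.
    by exists (k + (odd k != b)); rewrite ?leq_addr // oddD oddb; case: odd; case: b.
  exists (c k'); last by apply: le_trans le_uk (le_c _ _ le_kk').
  by split; [rewrite -odd_k'; apply: (chain k').2 | exists k'].
by exists I; split; [apply: (adh false) | apply: (adh true)].
Qed.

End AlternatingChains.

Section Pumping.
Variable S : finType.
Implicit Types (c : nat -> seq S) (P B Q : seq S) (fs : seq (seq S)).

Lemma chain_blocks d c fs0 : (forall n, dsubword d (c n) (c n.+1)) ->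
  fs0 != [::] -> flatten fs0 = c 0 ->
  exists F : nat -> seq (seq S), F 0 = fs0 /\ forall n,
    [/\ flatten (F n) = c n, size (F n) = size fs0 & dsubwords d (F n) (F n.+1)].
Proof.
move=> chain fs0_neq0 flat0.
pose Inv n fs := flatten fs = c n /\ size fs = size fs0.
have next n fs : Inv n fs -> exists gs, Inv n.+1 gs /\ dsubwords d fs gs.
  move=> [flat_fs size_fs]; have := chain n; rewrite -flat_fs.
  case/dsubword_flattenE=> [|gs flat_gs sub_fs]; first by rewrite -size_eq0 size_fs size_eq0.
  by exists gs; split=> //; split=> //; rewrite -sub_fs.1.
have [F [F0 F_spec]] := dependent_choice_nat (conj flat0 erefl : Inv 0 fs0) next.
by exists F; split=> // n; have [[]] := F_spec n.
Qed.

Lemma recurrent_accepting_run (A : nfa S) (F : nat -> seq (seq S)) K (P : nat -> Prop) :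
  (forall n, size (F n) = K) ->
  (forall N, exists2 n, N <= n & P n /\ nfa_lang A (flatten (F n))) ->
  exists s : seq (nfa_state A),
    forall N, exists2 n, N <= n & P n /\ nfa_accepting_run (F n) s.
Proof.
move=> size_F lang_F.
pose R n (t : K.+1.-tuple (nfa_state A)) := P n /\ nfa_accepting_run (F n) t.
have [t R_t] : exists t, forall N, exists2 n, N <= n & R n t.
  apply: recurrent_value => N.
  have [n le_Nn [Pn /nfa_lang_accepting_run [s acc_s]]] := lang_F N.
  have size_s : size s == K.+1 by rewrite (nfa_accepting_run_size acc_s) size_F.
  by exists n, (Tuple size_s).
by exists t.
Qed.

Lemma alt_chain_pumpable (E O : nfa S) d c P B Q :
  let N := #|nfa_state E| * #|nfa_state E| * #|nfa_state O| in
  alt_chain (dsubword d) (nfa_lang E) (nfa_lang O) c -> c 0 = P ++ B ++ Q -> N <= size B ->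
  exists i j (G : nat -> seq (seq S)), [/\ i < j <= N,
    G 0 = P :: rcons [seq [:: a] | a <- B] Q &
    forall k, alt_chain (dsubword d) (nfa_lang E) (nfa_lang O) (fun n => pump i j k (G n))].
Proof.
move=> N chain c0 le_NB.
pose fs0 := P :: rcons [seq [:: a] | a <- B] Q.
have flat0 : flatten fs0 = c 0 by rewrite c0 /= -cats1 flatten_cat flatten_seq1 /= cats0.
have [F [F0 F_spec]] := @chain_blocks _ _ fs0 (fun n => (chain n).1) isT flat0.
have lang_F n : (if odd n then nfa_lang O else nfa_lang E) (flatten (F n)).
  by have [-> _ _] := F_spec n; apply: (chain n).2.
have size_F n : size (F n) = (size B).+2.
  by have [_ -> _] := F_spec n; rewrite /= size_rcons size_map.
have sub_F : {homo F : n n' / n <= n' >-> dsubwords d n n'}.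
  by apply: homo_leq (@dsubwords_refl _ d) (@dsubwords_trans _ d) _ => n; case: (F_spec n).
have [[|e0 s0] acc0] := nfa_lang_accepting_run (lang_F 0) => //.
have [[|o0 s1] // _] := nfa_lang_accepting_run (lang_F 1).
have evens M : exists2 n, M <= n & ~~ odd n /\ nfa_lang E (flatten (F n)).
  exists M.*2; first by rewrite -addnn leq_addr.
  by have := lang_F M.*2; rewrite odd_double.
have odds M : exists2 n, M <= n & odd n /\ nfa_lang O (flatten (F n)).
  exists M.*2.+1; first by rewrite -addnn leqW ?leq_addr.
  by have := lang_F M.*2.+1; rewrite /= odd_double.
have [sE recE] := recurrent_accepting_run size_F evens.
have [sO recO] := recurrent_accepting_run size_F odds.
pose loop_states b := (nth e0 (e0 :: s0) b.+1, nth e0 sE b.+1, nth o0 sO b.+1).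
have card_states : #|{: nfa_state E * nfa_state E * nfa_state O}| <= N by rewrite !card_prod.
have [i [j [lt_ijN [eq0 eqE eqO]]]] := pigeonhole_nat loop_states card_states.
have [ns [ns0 ns_spec]] := @alternating_subsequence
  (fun n => ~~ odd n /\ nfa_accepting_run (F n) sE) (fun n => odd n /\ nfa_accepting_run (F n) sO)
  recE recO.
have lt_jF n : j < size (F n) by rewrite size_F; lia.
exists i, j, (fun n => F (ns n)); split=> // [|k n]; first by rewrite ns0 F0.
split; first by apply/dsubword_pump/sub_F/ltnW; case: (ns_spec n).
case: n => [|n]; first by rewrite ns0; apply: nfa_lang_pump acc0 _ eq0; rewrite lt_jF; lia.
have [_] := ns_spec n; case: (odd n.+1) => -[_ acc];
  [apply: nfa_lang_pump acc _ eqO | apply: nfa_lang_pump acc _ eqE]; rewrite lt_jF; lia.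
Qed.

End Pumping.

Section Scaling.
Variables (S : finType) (m d l : nat).
Hypotheses (fact_dvd_d : (m ^ 3)`! %| d) (l_gt0 : 0 < l).
Variables (E O : nfa S).
Hypotheses (card_E : #|nfa_state E| <= m) (card_O : #|nfa_state O| <= m).

Lemma alt_chain_scale c P B Q :
  alt_chain (dsubword d) (nfa_lang E) (nfa_lang O) c -> c 0 = P ++ B ++ Q -> d %| size B ->
  exists c' B', [/\ alt_chain (dsubword d) (nfa_lang E) (nfa_lang O) c',
                   c' 0 = P ++ B' ++ Q & size B' = l * size B].
Proof.
move=> chain c0 dvd_B; have [B_nil | B_gt0] := posnP (size B).
  by exists c, B; rewrite B_nil muln0.
have le_N : #|nfa_state E| * #|nfa_state E| * #|nfa_state O| <= m ^ 3.
  by rewrite -[3]/(1 + 1 + 1) !expnD !expn1; apply: leq_mul; first apply: leq_mul.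
have le_mB : (m ^ 3)`! <= size B := dvdn_leq B_gt0 (dvdn_trans fact_dvd_d dvd_B).
have [i [j [G [/andP [lt_ij le_jN] G0 pumped]]]] :=
  alt_chain_pumpable chain c0 (leq_trans le_N (leq_trans (fact_geq _) le_mB)).
have period_dvd : (j - i) %| size B.
  apply: dvdn_trans (dvdn_trans fact_dvd_d dvd_B); apply: dvdn_fact; lia.
have le_jB : j <= size B by have := fact_geq (m ^ 3); lia.
(* Pumping [k] more times inserts [k (j - i) = (l - 1) |B|] letters. *)
have [k k_period] : exists k, (j - i) * k = (l - 1) * size B.
  by exists ((l - 1) * (size B %/ (j - i))); rewrite mulnCA [(j - i) * _]mulnC divnK.
exists (fun n => pump i j k.+1 (G n)),
  (take i B ++ flatten (nseq k.+1 (take (j - i) (drop i B))) ++ drop j B).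
split=> //; first by rewrite G0 pump_letters ?lt_ij.
rewrite !size_cat size_flatten /shape map_nseq sumn_nseq !size_takel ?size_drop; try lia.
by rewrite k_period -[l in RHS](subnK l_gt0) mulnDl mul1n; lia.
Qed.

Lemma alt_chain_lift y x X Y c :
  alt_chain (dsubword d) (nfa_lang E) (nfa_lang O) c -> c 0 = X ++ Y ->
  dsubword (l * d) x X -> dsubword d y Y ->
  exists c', alt_chain (dsubword d) (nfa_lang E) (nfa_lang O) c' /\
             dsubword (l * d) (x ++ y) (c' 0).
Proof.
elim: y x X Y c => [|a y IH] x X Y c chain c0 sub_x.
  move/dsubword_nilE=> dvd_Y; rewrite -[Y]cats0 in c0.
  have [c' [B' [chain' c'0 size_B']]] := alt_chain_scale chain c0 dvd_Y.
  exists c'; split=> //; rewrite c'0.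
  by apply: dsubword_cat sub_x (dsubword_nil _); rewrite cats0 size_B' dvdn_mul.
case/dsubword_consE=> [B [Y' [Y_eq dvd_B sub_y]]]; rewrite Y_eq in c0.
have [c1 [B1 [chain1 c10 size_B1]]] := alt_chain_scale chain c0 dvd_B.
have sub_xa : dsubword (l * d) (x ++ [:: a]) (X ++ B1 ++ [:: a]).
  apply: dsubword_cat sub_x _; apply: dsubword_cons (dsubword_refl _ _).
  by rewrite size_B1 dvdn_mul.
have c10' : c1 0 = (X ++ B1 ++ [:: a]) ++ Y' by rewrite c10 -!catA.
have [c' [chain' sub']] := IH _ _ _ _ chain1 c10' sub_xa sub_y.
by exists c'; rewrite -cat1s catA.
Qed.

End Scaling.

Lemma alt_chain_upgrade (S : finType) (m d l : nat) (E O : nfa S) c :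
  (m ^ 3)`! %| d -> 0 < l -> #|nfa_state E| <= m -> #|nfa_state O| <= m ->
  alt_chain (dsubword d) (nfa_lang E) (nfa_lang O) c ->
  exists w, alt_chain (dsubword (l * d)) (nfa_lang E) (nfa_lang O) w.
Proof.
move=> fact_dvd_d l_gt0 card_E card_O chain.
pose Inv k := alt_chain (dsubword d)
  (nfa_lang (if odd k then O else E)) (nfa_lang (if odd k then E else O)).
have next k c' : Inv k c' -> exists c'', Inv k.+1 c'' /\ dsubword (l * d) (c' 0) (c'' 0).
  rewrite /Inv /=; case: odd => /= chain';
    [have := alt_chain_lift fact_dvd_d l_gt0 card_E card_O (alt_chain_shift chain') |
     have := alt_chain_lift fact_dvd_d l_gt0 card_O card_E (alt_chain_shift chain')];
    by move/(_ (c' 0) [::] [::] (c' 1) erefl (dsubword_refl _ _) (chain' 0).1).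
have [C [_ C_spec]] := dependent_choice_nat (chain : Inv 0 c) next.
exists (fun k => C k 0) => k; split; first exact: (C_spec k).2.
by have [/(_ 0) [_]] := C_spec k; case: odd.
Qed.

Theorem mainTheorem7 (S : finType) (A1 A2 : nfa S) (m d : nat) :
  #|nfa_state A1| <= m -> #|nfa_state A2| <= m ->
  0 < d -> 2 * (m ^ 3)`! %| d ->
  (exists I, in_adherence (subword_mod d) (nfa_lang A1) I /\
             in_adherence (subword_mod d) (nfa_lang A2) I) ->
  forall l, 0 < l ->
    exists I, in_adherence (subword_mod (l * d)) (nfa_lang A1) I /\
              in_adherence (subword_mod (l * d)) (nfa_lang A2) I.
Proof.
move=> card_A1 card_A2 _ dvd_d [I [adh1 adh2]] l l_gt0.
have fact_dvd_d : (m ^ 3)`! %| d := dvdn_trans (dvdn_mull 2 (dvdnn _)) dvd_d.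
have [c chain] := adherence_alt_chain adh1 adh2.
have [w chain_w] := alt_chain_upgrade fact_dvd_d l_gt0 card_A1 card_A2
  (alt_chain_sub (fun u v => (subword_modP d u v).1) chain).
apply: alt_chain_adherence (alt_chain_sub (fun u v => (subword_modP _ u v).2) chain_w).
  by move=> u; apply/subword_modP/dsubword_refl.
by move=> v u w' /subword_modP uv /subword_modP vw; apply/subword_modP/(dsubword_trans uv vw).
Qed.
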